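(* Consider the optimization problem \[ \max_{\mathsf{V}_1,\dots,\mathsf{V}_K}\ \sum_{k=1}^K \log_2(1+\gamma_k)\quad\text{s.t.}\quad \sum_{k=1}^K\int_{\mathcal{A}}|\mathsf{V}_k(\mathbf{r})|^2\,d\mathbf{r}=P_{\max}, \] where \[ \gamma_k=\frac{|\mathcal{A}_k|\cdot\left|\int_{\mathcal{A}}\mathsf{H}_k(\mathbf{r})\mathsf{V}_k(\mathbf{r})\,d\mathbf{r}\right|^2}{\sum_{j=1,j\neq k}^K|\mathcal{A}_j|\cdot\left|\int_{\mathcal{A}}\mathsf{H}_k(\mathbf{r})\mathsf{V}_j(\mathbf{r})\,d\mathbf{r}\right|^2+\sigma_k^2}. \] Then the optimal beamforming lies in the function subspace spanned by $\mathsf{H}_1^*(\mathbf{r}),\dots,\mathsf{H}_K^*(\mathbf{r})$: for each $k$, the optimal $\mathsf{V}_k$ can be written as $\mathsf{V}_k(\mathbf{r})=\sum_{j=1}^K b_{jk}\mathsf{H}_j^*(\mathbf{r})$ for some complex scalars $b_{jk}$.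
   Context: A base station with a continuous aperture array occupying a region $\mathcal{A}\subseteq\mathbb{R}^3$ serves $K$ users. User $k$ has aperture of area $|\mathcal{A}_k|>0$ centered at $\mathbf{s}_k\in\mathbb{R}^3$, and noise variance $\sigma_k^2>0$; $P_{\max}>0$ is the transmit power budget. The beamforming $\mathsf{V}_k:\mathcal{A}\to\mathbb{C}$ for user $k$ is a square-integrable function. The channel response of user $k$ is \[ \mathsf{H}_k(\mathbf{r})=\sqrt{\frac{\mathbf{e}_r^T(\mathbf{s}_k-\mathbf{r})}{\|\mathbf{r}-\mathbf{s}_k\|}}\cdot\frac{j k_0\eta e^{-jk_0\|\mathbf{r}-\mathbf{s}_k\|}}{4\pi\|\mathbf{r}-\mathbf{s}_k\|}\left(1+\frac{j/k_0}{\|\mathbf{r}-\mathbf{s}_k\|}-\frac{1/k_0^2}{\|\mathbf{r}-\mathbf{s}_k\|^2}\right), \] where $\mathbf{e}_r\in\mathbb{R}^3$ is the normal vector of the base-station aperture, $\eta=120\pi$, $k_0=2\pi/\lambda$ with $\lambda$ the wavelength, and $j$ is the imaginary unit. $(\cdot)^*$ denotes complex conjugation. *)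

From mathcomp Require Import all_boot all_algebra.
From mathcomp Require Import all_classical all_reals all_analysis.
From mathcomp Require Export complex.
Import GRing.Theory Num.Theory.
Set Implicit Arguments. Unset Strict Implicit. Unset Printing Implicit Defensive.
Local Open Scope ring_scope.

Section CAPA.
Variable R : realType.

Definition vec3 := (R * R * R)%type.
Definition px (p : vec3) : R := p.1.1.
Definition py (p : vec3) : R := p.1.2.
Definition pz (p : vec3) : R := p.2.
Definition sub3 (p q : vec3) : vec3 := (px p - px q, py p - py q, pz p - pz q).
Definition dot3 (p q : vec3) : R := px p * px q + py p * py q + pz p * pz q.
Definition norm3 (p : vec3) : R := Num.sqrt (dot3 p p).

Definition cR (x : R) : R[i] := Complex x 0.
Definition jI : R[i] := Complex 0 1.
Definition sqn (z : R[i]) : R := (complex.Re z) ^+ 2 + (complex.Im z) ^+ 2.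

(* free-space impedance eta = 120 pi and wavenumber k0 = 2 pi / lambda *)
Definition eta0 : R := 120 * pi.
Definition k0 (lambda : R) : R := 2 * pi / lambda.

(* channel response H_k(r) of a user centred at s, aperture normal er *)
Definition chan (lambda : R) (er s r : vec3) : R[i] :=
  let d := norm3 (sub3 r s) in
  let k := k0 lambda in
  cR (Num.sqrt (dot3 er (sub3 s r) / d))
  * ((jI * cR (k * eta0) * Complex (cos (k * d)) (- sin (k * d)))
      / cR (4 * pi * d))
  * (1 + jI / cR (k * d) - cR (1 / (k ^+ 2 * d ^+ 2))).

Variables (dm : measure_display) (T : measurableType dm)
          (mu : {measure set T -> \bar R}) (A : set T).

Definition cint (f : T -> R[i]) : R[i] :=
  Complex (Rintegral mu A (fun x => complex.Re (f x))) (Rintegral mu A (fun x => complex.Im (f x))).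

Definition sq_int (f : T -> R[i]) : Prop :=
  measurable_fun A (fun x => complex.Re (f x)) /\ measurable_fun A (fun x => complex.Im (f x)) /\
  (\int[mu]_(x in A) (sqn (f x))%:E < +oo)%E.

Variables (K : nat) (H : 'I_K -> T -> R[i]) (Ak sigma2 : 'I_K -> R) (Pmax : R).

Definition power (V : 'I_K -> T -> R[i]) : \bar R :=
  (\sum_(k < K) \int[mu]_(x in A) (sqn (V k x))%:E)%E.

Definition sinr (V : 'I_K -> T -> R[i]) (k : 'I_K) : R :=
  Ak k * sqn (cint (fun r => H k r * V k r)) /
  (\sum_(j < K | j != k) Ak j * sqn (cint (fun r => H k r * V j r)) + sigma2 k).

Definition log2 (x : R) : R := ln x / ln 2.

Definition sum_rate (V : 'I_K -> T -> R[i]) : R :=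
  \sum_(k < K) log2 (1 + sinr V k).

Definition feasible (V : 'I_K -> T -> R[i]) : Prop :=
  (forall k, sq_int (V k)) /\ power V = (Pmax%:E)%E.

Definition optimal (V : 'I_K -> T -> R[i]) : Prop :=
  feasible V /\ forall W, feasible W -> sum_rate W <= sum_rate V.

End CAPA.

(* Write V_k = p + q with p = sum_j b_j H_j^* and q "orthogonal" to the channels,
   i.e. int_A H_i q = 0 for every i.  Such b exist because the vector
   (int_A H_i V_k)_i lies in the row space of the Gram matrix [int_A H_i H_j^* ]_ij:
   a vector x killed by the Gram matrix makes sum_i x_i H_i orthogonal to itself,
   hence null.  The SINRs see the beamformers only through the numbers
   int_A H_i V_j, so replacing V_k by p changes no SINR and, by Pythagoras, saves
   the power ||q||^2.  If ||q|| > 0, scaling the new beamformers by a real c > 1 so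
   that they spend the whole budget multiplies all signal and interference powers
   by c^2; this strictly raises the SINR of every user with a nonzero signal and
   lowers no SINR.  An optimal solution has such a user, because beaming H_k^* to
   user k alone already achieves a positive rate.  Hence ||q|| = 0. *)

From Pilot Require Import Defs.
From mathcomp Require Import all_boot all_algebra.
From mathcomp Require Import all_classical all_reals all_analysis.
From mathcomp Require Import complex.
From mathcomp Require Import order measurable_realfun ring lra.
Import Order.TTheory GRing.Theory Num.Theory.
Import numFieldNormedType.Exports.
Local Open Scope ring_scope.
Local Open Scope classical_set_scope.
Local Open Scope complex_scope.
Set Implicit Arguments. Unset Strict Implicit. Unset Printing Implicit Defensive.

Local Notation Re := complex.Re.
Local Notation Im := complex.Im.

Section SquaredModulus.
Variable R : realType.
Implicit Types z w : R[i].

Lemma sqnE z : (sqn z)%:C = z * z^*.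
Proof. by rewrite /sqn add_Re2_Im2 sqr_normc. Qed.

Lemma sqn_ge0 z : 0 <= sqn z.
Proof. by rewrite /sqn addr_ge0 ?sqr_ge0. Qed.

Lemma sqn_eq0 z : (sqn z == 0) = (z == 0).
Proof. by rewrite -(inj_eq (@complexI _)) sqnE mulf_eq0 conjc_eq0 orbb. Qed.

Lemma sqn_gt0 z : (0 < sqn z) = (z != 0).
Proof. by rewrite lt0r sqn_eq0 sqn_ge0 andbT. Qed.

Lemma sqnM z w : sqn (z * w) = sqn z * sqn w.
Proof. by case: z => a b; case: w => c e; rewrite /sqn /=; ring. Qed.

Lemma sqn_conj z : sqn z^* = sqn z.
Proof. by case: z => a b; rewrite /sqn /= sqrrN. Qed.

Lemma sqn_real (x : R) : sqn x%:C = x ^+ 2.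
Proof. by rewrite /sqn /= expr0n addr0. Qed.

Lemma sqn0 : sqn (0 : R[i]) = 0.
Proof. by rewrite /sqn /= expr0n addr0. Qed.

Lemma ReM z w : Re (z * w) = Re z * Re w - Im z * Im w.
Proof. by case: z; case: w. Qed.

Lemma ImM z w : Im (z * w) = Re z * Im w + Im z * Re w.
Proof. by case: z; case: w. Qed.

Lemma sqnD z w : sqn (z + w) = sqn z + sqn w + 2 * Re (z * w^*).
Proof. by case: z => a b; case: w => c e; rewrite /sqn /=; ring. Qed.

Let sqr_hints (a b c e : R) :
  [/\ 0 <= a ^+ 2, 0 <= b ^+ 2, 0 <= c ^+ 2 & 0 <= e ^+ 2].
Proof. by split; exact: sqr_ge0. Qed.

Lemma normr_ReM_le z w : `|Re (z * w)| <= sqn z + sqn w.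
Proof.
case: z => a b; case: w => c e; rewrite ReM /sqn /= ler_norml.
have [? ? ? ?] := sqr_hints a b c e; apply/andP; split.
- by have := sqr_ge0 (a + c); have := sqr_ge0 (b - e); nra.
- by have := sqr_ge0 (a - c); have := sqr_ge0 (b + e); nra.
Qed.

Lemma normr_ImM_le z w : `|Im (z * w)| <= sqn z + sqn w.
Proof.
case: z => a b; case: w => c e; rewrite ImM /sqn /= ler_norml.
have [? ? ? ?] := sqr_hints a b c e; apply/andP; split.
- by have := sqr_ge0 (a + e); have := sqr_ge0 (b + c); nra.
- by have := sqr_ge0 (a - e); have := sqr_ge0 (b - c); nra.
Qed.

End SquaredModulus.

Section ComplexMeasurable.
Variables (d : measure_display) (T : measurableType d) (R : realType) (A : set T).
Implicit Types f g : T -> R[i].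

Definition cmeasurable f :=
  measurable_fun A (fun x => Re (f x)) /\ measurable_fun A (fun x => Im (f x)).

Lemma cmeasurable_complex (u v : T -> R) :
  measurable_fun A u -> measurable_fun A v -> cmeasurable (fun x => Complex (u x) (v x)).
Proof. by split. Qed.

Lemma cmeasurable_real (u : T -> R) : measurable_fun A u -> cmeasurable (fun x => (u x)%:C).
Proof. by move=> mu; split => //; exact: measurable_cst. Qed.

Lemma cmeasurable_cst (c : R[i]) : cmeasurable (fun=> c).
Proof. by split; exact: measurable_cst. Qed.

Lemma cmeasurableD f g : cmeasurable f -> cmeasurable g -> cmeasurable (fun x => f x + g x).
Proof.
move=> [f1 f2] [g1 g2]; split.
- by apply: eq_measurable_fun (measurable_funD f1 g1) => x _; rewrite raddfD.
- by apply: eq_measurable_fun (measurable_funD f2 g2) => x _; rewrite raddfD.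
Qed.

Lemma cmeasurableB f g : cmeasurable f -> cmeasurable g -> cmeasurable (fun x => f x - g x).
Proof.
move=> [f1 f2] [g1 g2]; split.
- by apply: eq_measurable_fun (measurable_funB f1 g1) => x _; rewrite raddfB.
- by apply: eq_measurable_fun (measurable_funB f2 g2) => x _; rewrite raddfB.
Qed.

Lemma cmeasurableM f g : cmeasurable f -> cmeasurable g -> cmeasurable (fun x => f x * g x).
Proof.
move=> [f1 f2] [g1 g2]; split.
- apply: eq_measurable_fun
    (measurable_funB (measurable_funM f1 g1) (measurable_funM f2 g2)) => x _ /=.
  by case: (f x) => a b; case: (g x).
- apply: eq_measurable_fun
    (measurable_funD (measurable_funM f1 g2) (measurable_funM f2 g1)) => x _ /=.
  by case: (f x) => a b; case: (g x).
Qed.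

Lemma cmeasurable_conj f : cmeasurable f -> cmeasurable (fun x => (f x)^*).
Proof.
move=> [f1 f2]; split.
- by apply: eq_measurable_fun f1 => x _ /=; case: (f x).
- by apply: eq_measurable_fun (measurable_funN f2) => x _ /=; case: (f x).
Qed.

Lemma cmeasurable_sqn f : cmeasurable f -> measurable_fun A (fun x => sqn (f x)).
Proof. by move=> [f1 f2]; apply: measurable_funD; apply: measurable_funX. Qed.

End ComplexMeasurable.

Section SquareIntegrable.
Variables (d : measure_display) (T : measurableType d) (R : realType)
  (mu : {measure set T -> \bar R}) (A : set T).
Hypothesis mA : measurable A.
Implicit Types f g : T -> R[i].
Local Notation sq_int := (sq_int mu A).

Definition sqnorm f : R := \int[mu]_(x in A) sqn (f x).

Lemma sq_intP f :
  sq_int f <-> cmeasurable A f /\ mu.-integrable A (EFin \o (fun x => sqn (f x))).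
Proof.
have abs_sqn x : `|sqn (f x)| = sqn (f x) by rewrite ger0_norm // sqn_ge0.
split.
- move=> [f1 [f2 fin]]; split => //; apply/integrableP; split.
    exact/measurable_EFinP/cmeasurable_sqn.
  by under eq_integral do rewrite /= abs_sqn.
- move=> [[f1 f2] /integrableP [_ fin]]; split => //; split => //.
  by move: fin; under eq_integral do rewrite /= abs_sqn.
Qed.

Lemma sq_int_cmeasurable f : sq_int f -> cmeasurable A f.
Proof. by case=> f1 [f2 _]. Qed.

Lemma sq_int_le f g (c : R) : cmeasurable A f -> sq_int g ->
  (forall x, A x -> sqn (f x) <= c * sqn (g x)) -> sq_int f.
Proof.
move=> mf /sq_intP [_ ig] fg; apply/sq_intP; split => //.
apply: (le_integrable mA _ _ (integrableZl mA c ig)).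
  exact/measurable_EFinP/cmeasurable_sqn.
move=> x Ax; rewrite /= lee_fin ger0_norm ?sqn_ge0 //.
exact: le_trans (fg x Ax) (ler_norm _).
Qed.

Lemma sq_int0 : sq_int (fun=> 0).
Proof.
split; first exact: measurable_cst.
split; first exact: measurable_cst.
by under eq_integral do rewrite sqn0; rewrite integral0.
Qed.

Lemma sq_intD f g : sq_int f -> sq_int g -> sq_int (fun x => f x + g x).
Proof.
move=> sf sg; have /sq_intP [mf If] := sf; have /sq_intP [mg Ig] := sg.
apply/sq_intP; split; first exact: cmeasurableD.
apply: (le_integrable mA _ _ (integrableZl mA 2 (integrableD mA If Ig))).
  exact/measurable_EFinP/cmeasurable_sqn/cmeasurableD.
move=> x _; rewrite /= lee_fin.
rewrite ger0_norm ?sqn_ge0 // ger0_norm; last by rewrite mulr_ge0 // addr_ge0 // sqn_ge0.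
case: (f x) => a b; case: (g x) => c e; rewrite /sqn /=.
have := sqr_ge0 (a - c); have := sqr_ge0 (b - e); nra.
Qed.

Lemma sq_intZ (c : R[i]) f : sq_int f -> sq_int (fun x => c * f x).
Proof.
move=> sf; apply: (sq_int_le _ sf) => [|x _]; last by rewrite sqnM.
exact/cmeasurableM/(sq_int_cmeasurable sf)/cmeasurable_cst.
Qed.

Lemma sq_intB f g : sq_int f -> sq_int g -> sq_int (fun x => f x - g x).
Proof. by move=> sf sg; under eq_fun do rewrite -mulN1r; exact/sq_intD/sq_intZ. Qed.

Lemma sq_int_conj f : sq_int f -> sq_int (fun x => (f x)^*).
Proof.
move=> sf; apply: (@sq_int_le _ _ 1 _ sf) => [|x _]; last by rewrite sqn_conj mul1r.
exact/cmeasurable_conj/(sq_int_cmeasurable sf).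
Qed.

Lemma sq_int_sum (I : Type) (r : seq I) (F : I -> T -> R[i]) :
  (forall i, sq_int (F i)) -> sq_int (fun x => \sum_(i <- r) F i x).
Proof.
move=> sF; elim: r => [|i r IH].
  by under eq_fun do rewrite big_nil; exact: sq_int0.
by under eq_fun do rewrite big_cons; exact: sq_intD.
Qed.

Lemma sq_int_bounded f (C : R) : (mu A < +oo)%E -> cmeasurable A f ->
  (forall x, A x -> sqn (f x) <= C) -> sq_int f.
Proof.
move=> muA mf fC; apply: (@sq_int_le _ (fun=> 1) C mf) => [|x Ax]; last first.
  by rewrite -[1]/(1%:C) sqn_real expr1n mulr1 fC.
split; first exact: measurable_cst.
split; first exact: measurable_cst.
by rewrite integral_cst // -[1]/(1%:C) sqn_real expr1n mul1e.
Qed.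

Lemma sqnorm_ge0 f : 0 <= sqnorm f.
Proof. by apply: Rintegral_ge0 => x _; exact: sqn_ge0. Qed.

Lemma sq_int_sqnormE f : sq_int f ->
  (\int[mu]_(x in A) (sqn (f x))%:E)%E = (sqnorm f)%:E.
Proof.
move=> [_ [_ fin]]; rewrite /sqnorm /Rintegral fineK // ge0_fin_numE //.
by apply: integral_ge0 => x _; rewrite lee_fin sqn_ge0.
Qed.

Lemma sqnormZ (c : R[i]) f : sq_int f -> sqnorm (fun x => c * f x) = sqn c * sqnorm f.
Proof.
move=> /sq_intP [_ If]; rewrite /sqnorm -RintegralZl //.
by apply: eq_Rintegral => x _; rewrite sqnM.
Qed.

Lemma sqnorm_conj f : sqnorm (fun x => (f x)^*) = sqnorm f.
Proof. by apply: eq_Rintegral => x _; rewrite sqn_conj. Qed.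

Lemma sqnorm0 : sqnorm (fun=> 0) = 0.
Proof. by rewrite /sqnorm; under eq_Rintegral do rewrite sqn0; rewrite Rintegral_cst // mul0r. Qed.

Lemma sqnorm_eq0_ae f : sq_int f -> sqnorm f = 0 -> {ae mu, forall x, A x -> f x = 0}.
Proof.
move=> sf f0.
have : ae_eq mu A (EFin \o (fun x => sqn (f x))) (cst 0%E).
  apply/(ae_eq_integral_abs mu mA).
    exact/measurable_EFinP/cmeasurable_sqn/sq_int_cmeasurable.
  have -> : 0%E = (sqnorm f)%:E by rewrite f0.
  rewrite -sq_int_sqnormE //.
  by apply: eq_integral => x _; rewrite gee0_abs // lee_fin sqn_ge0.
apply: filterS => x fx0 Ax; apply/eqP; rewrite -sqn_eq0.
by have [->] := fx0 Ax.
Qed.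

Lemma sqnorm_gt0 f : (0 < mu A)%E -> sq_int f -> (forall x, A x -> f x != 0) ->
  0 < sqnorm f.
Proof.
move=> muA sf fn0; rewrite lt0r sqnorm_ge0 andbT; apply/eqP => f0.
have [N [mN N0 AN]] := sqnorm_eq0_ae sf f0.
have : (mu A <= mu N)%E.
  apply: le_measure; rewrite ?inE // => x Ax; apply: AN => /(_ Ax) /eqP.
  by rewrite (negbTE (fn0 x Ax)).
by rewrite N0 leNgt muA.
Qed.

End SquareIntegrable.

Section ComplexIntegral.
Variables (d : measure_display) (T : measurableType d) (R : realType)
  (mu : {measure set T -> \bar R}) (A : set T).
Hypothesis mA : measurable A.
Implicit Types f g : T -> R[i].
Local Notation sq_int := (sq_int mu A).
Local Notation sqnorm := (sqnorm mu A).
Local Notation cint := (cint mu A).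
Local Notation integrable u := (mu.-integrable A (EFin \o u)).

Definition cintegrable f := integrable (fun x => Re (f x)) /\ integrable (fun x => Im (f x)).

Let integrableZ_EFin (a : R) (u : T -> R) : integrable u -> integrable (fun x => a * u x).
Proof. by move=> iu; apply: (eq_integrable mA _ _ _ (integrableZl mA a iu)). Qed.

Let integrableD_EFin (u v : T -> R) : integrable u -> integrable v ->
  integrable (fun x => u x + v x).
Proof. by move=> iu iv; apply: (eq_integrable mA _ _ _ (integrableD mA iu iv)). Qed.

Lemma cintegrableZD (c : R[i]) f g : cintegrable f -> cintegrable g ->
  cintegrable (fun x => c * f x + g x).
Proof.
move=> [f1 f2] [g1 g2]; split.
- apply: (eq_integrable mA _ _ _
    (integrableD_EFin (integrableD_EFin (integrableZ_EFin (Re c) f1)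
                                        (integrableZ_EFin (- Im c) f2)) g1)) => x _ /=.
  by rewrite [Re (_ + _)]raddfD /= ReM mulNr.
- apply: (eq_integrable mA _ _ _
    (integrableD_EFin (integrableD_EFin (integrableZ_EFin (Re c) f2)
                                        (integrableZ_EFin (Im c) f1)) g2)) => x _ /=.
  by rewrite [Im (_ + _)]raddfD /= ImM.
Qed.

Lemma cintZD (c : R[i]) f g : cintegrable f -> cintegrable g ->
  cint (fun x => c * f x + g x) = c * cint f + cint g.
Proof.
move=> [f1 f2] [g1 g2]; rewrite /Defs.cint.
under eq_Rintegral do rewrite [Re (_ + _)]raddfD /= ReM -mulNr.
under [X in Complex _ X]eq_Rintegral do rewrite [Im (_ + _)]raddfD /= ImM.
rewrite !RintegralD ?integrableD_EFin ?integrableZ_EFin // !RintegralZl //.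
by case: c => a b /=; rewrite mulNr.
Qed.

Lemma cintegrable0 : cintegrable (fun=> 0).
Proof. by split; exact: integrable0. Qed.

Lemma cint0 : cint (fun=> 0) = 0.
Proof. by rewrite /Defs.cint Rintegral_cst // mul0r. Qed.

Lemma cintZ (c : R[i]) f : cintegrable f -> cint (fun x => c * f x) = c * cint f.
Proof.
move=> If; under eq_fun do rewrite -[c * _]addr0.
by rewrite cintZD ?cint0 ?addr0 //; exact: cintegrable0.
Qed.

Lemma cintegrable_sum (I : Type) (r : seq I) (c : I -> R[i]) (F : I -> T -> R[i]) :
  (forall i, cintegrable (F i)) -> cintegrable (fun x => \sum_(i <- r) c i * F i x).
Proof.
move=> iF; elim: r => [|i r IH].
  by under eq_fun do rewrite big_nil; exact: cintegrable0.
by under eq_fun do rewrite big_cons; exact: cintegrableZD.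
Qed.

Lemma cint_sum (I : Type) (r : seq I) (c : I -> R[i]) (F : I -> T -> R[i]) :
  (forall i, cintegrable (F i)) ->
  cint (fun x => \sum_(i <- r) c i * F i x) = \sum_(i <- r) c i * cint (F i).
Proof.
move=> iF; elim: r => [|i r IH].
  by under eq_fun do rewrite big_nil; rewrite big_nil cint0.
under eq_fun do rewrite big_cons.
by rewrite big_cons cintZD ?IH //; exact: cintegrable_sum.
Qed.

Lemma cintegrable_conj f : cintegrable f -> cintegrable (fun x => (f x)^*).
Proof.
move=> [f1 f2]; split; first by apply: (eq_integrable mA _ _ _ f1) => x _ /=; case: (f x).
apply: (eq_integrable mA _ _ _ (integrableZ_EFin (-1) f2)) => x _ /=.
by case: (f x) => a b; rewrite /= mulN1r.
Qed.

Lemma cint_conj f : cintegrable f -> cint (fun x => (f x)^*) = (cint f)^*.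
Proof.
move=> [f1 f2]; rewrite /Defs.cint /=; congr Complex.
  by apply: eq_Rintegral => x _; case: (f x).
rewrite -mulN1r -RintegralZl //; apply: eq_Rintegral => x _.
by case: (f x) => a b; rewrite /= mulN1r.
Qed.

Lemma cintegrableM f g : sq_int f -> sq_int g -> cintegrable (fun x => f x * g x).
Proof.
move=> /sq_intP [mf If] /sq_intP [mg Ig].
have [mRe mIm] := cmeasurableM mf mg.
split; apply: (le_integrable mA _ _ (integrableD_EFin If Ig)) => [|x _].
- exact/measurable_EFinP.
- by rewrite /= lee_fin (le_trans (normr_ReM_le _ _) (ler_norm _)).
- exact/measurable_EFinP.
- by rewrite /= lee_fin (le_trans (normr_ImM_le _ _) (ler_norm _)).
Qed.

Lemma cint_real (u : T -> R) : cint (fun x => (u x)%:C) = (\int[mu]_(x in A) u x)%:C.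
Proof. by rewrite /Defs.cint /= Rintegral_cst // mul0r. Qed.

Lemma cint_sqnorm f : cint (fun x => f x * (f x)^*) = (sqnorm f)%:C.
Proof. by under eq_fun do rewrite -sqnE; exact: cint_real. Qed.

Let Rintegral_ae0 (u : T -> R) : measurable_fun A u ->
  {ae mu, forall x, A x -> u x = 0} -> \int[mu]_(x in A) u x = 0.
Proof.
move=> mu0 u0; rewrite /Rintegral (@ae_eq_integral _ _ _ mu A (cst 0%E)) ?integral0 //.
- exact/measurable_EFinP.
- by apply: filterS u0 => x ux0 /ux0 /= ->.
Qed.

Lemma cint_ae0 f : cmeasurable A f -> {ae mu, forall x, A x -> f x = 0} -> cint f = 0.
Proof.
move=> [f1 f2] f0; rewrite /Defs.cint !Rintegral_ae0 //.
- by apply: filterS f0 => x fx0 /fx0 ->.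
- by apply: filterS f0 => x fx0 /fx0 ->.
Qed.

Lemma cintM_sqnorm0 f g : sq_int f -> sq_int g -> sqnorm f = 0 ->
  cint (fun x => f x * g x) = 0.
Proof.
move=> sf sg f0; apply: cint_ae0.
  exact: cmeasurableM (sq_int_cmeasurable sf) (sq_int_cmeasurable sg).
by apply: filterS (sqnorm_eq0_ae mA sf f0) => x fx0 /fx0 ->; rewrite mul0r.
Qed.

Lemma sqnormD_orth f g : sq_int f -> sq_int g -> cint (fun x => f x * (g x)^*) = 0 ->
  sqnorm (fun x => f x + g x) = sqnorm f + sqnorm g.
Proof.
move=> sf sg fg0.
have [Ire _] := cintegrableM sf (sq_int_conj mA sg).
have /sq_intP [_ If] := sf; have /sq_intP [_ Ig] := sg.
have Re_orth : \int[mu]_(x in A) Re (f x * (g x)^*) = 0.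
  by have /(congr1 (@complex.Re _)) := fg0.
transitivity (\int[mu]_(x in A) (sqn (f x) + sqn (g x) + 2 * Re (f x * (g x)^*))).
  by apply: eq_Rintegral => x _; rewrite sqnD.
rewrite RintegralD; [|done|exact: integrableD_EFin|exact: integrableZ_EFin].
by rewrite RintegralZl // Re_orth mulr0 addr0 RintegralD.
Qed.

End ComplexIntegral.

Section ProjectionOnConjugateSpan.
Variables (d : measure_display) (T : measurableType d) (R : realType)
  (mu : {measure set T -> \bar R}) (A : set T).
Hypothesis mA : measurable A.
Local Notation sq_int := (sq_int mu A).
Local Notation cint := (cint mu A).
Variables (n : nat) (h : 'I_n -> T -> R[i]) (v : T -> R[i]).
Hypotheses (sh : forall i, sq_int (h i)) (sv : sq_int v).

Let gram : 'M[R[i]]_n := \matrix_(j, i) cint (fun t => h i t * (h j t)^*).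
Let rhs : 'rV[R[i]]_n := \row_i cint (fun t => h i t * v t).

Let cintegrable_gram i j : cintegrable mu A (fun t => h i t * (h j t)^*).
Proof. exact/(cintegrableM mA)/(sq_int_conj mA). Qed.

Lemma gram_kernel (x : 'cV_n) : gram *m x = 0 -> rhs *m x = 0.
Proof.
move=> Gx0; pose g t := \sum_(i < n) x i 0 * h i t.
(* int g h_j^* = 0 for every j, hence ||g||^2 = int g g^* = 0. *)
have sg : sq_int g by apply: (sq_int_sum mA) => i; exact: (sq_intZ mA).
have g_orth j : cint (fun t => g t * (h j t)^*) = 0.
  have := congr1 (fun X : 'cV_n => X j 0) Gx0; rewrite !mxE => <-.
  under [RHS]eq_bigr do rewrite mxE mulrC.
  rewrite -(cint_sum mA) => [|i]; last exact: cintegrable_gram.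
  rewrite /g; congr cint; apply/funext => t.
  by rewrite mulr_suml; apply: eq_bigr => i _; rewrite mulrA.
have g0 : sqnorm mu A g = 0.
  apply: complexI; rewrite -cint_sqnorm //.
  transitivity (cint (fun t => \sum_(j < n) (x j 0)^* * (g t * (h j t)^*))).
    congr cint; apply/funext => t; rewrite {2}/g rmorph_sum mulr_sumr.
    by apply: eq_bigr => j _; rewrite rmorphM mulrCA.
  rewrite (cint_sum mA) => [|j]; last exact/(cintegrableM mA)/(sq_int_conj mA).
  by rewrite big1 // => j _; rewrite g_orth mulr0.
apply/matrixP => a b; rewrite !ord1 !mxE -[RHS](cintM_sqnorm0 mA sg sv g0).
under eq_bigr do rewrite mxE mulrC.
rewrite -(cint_sum mA) => [|i]; last exact: (cintegrableM mA).
congr cint; apply/funext => t.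
by rewrite /g mulr_suml; apply: eq_bigr => i _; rewrite mulrA.
Qed.

Lemma exists_conj_span_residual : exists b : 'I_n -> R[i],
  forall i, cint (fun t => h i t * (v t - \sum_(j < n) b j * (h j t)^*)) = 0.
Proof.
have /submxP [D rhsE] : (rhs <= gram)%MS.
  rewrite submxE; apply/eqP/matrixP => a j.
  have := gram_kernel (x := col j (cokermx gram)).
  rewrite colE mulmxA mulmx_coker mul0mx => /(_ erefl).
  by rewrite mulmxA -colE => /(congr1 (fun X : 'cV_1 => X a 0)); rewrite !mxE.
exists (fun j => D 0 j) => i.
have -> : (fun t => h i t * (v t - \sum_(j < n) D 0 j * (h j t)^*)) =
    (fun t => - 1 * (\sum_(j < n) D 0 j * (h i t * (h j t)^*)) + h i t * v t).
  apply/funext => t; rewrite mulN1r mulrBr addrC mulr_sumr; congr (- _ + _).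
  by apply: eq_bigr => j _; rewrite mulrCA.
rewrite (cintZD mA) ?(cint_sum mA) //; last 2 first.
- exact: (cintegrable_sum mA).
- exact: (cintegrableM mA).
have := congr1 (fun X : 'rV_n => X 0 i) rhsE; rewrite !mxE => ->.
rewrite mulN1r addrC; apply/eqP; rewrite subr_eq0; apply/eqP/eq_bigr => j _.
by rewrite mxE.
Qed.

End ProjectionOnConjugateSpan.

Section LogRatio.
Variable R : realType.

Lemma log2_1p0 : log2 (1 + 0 : R) = 0.
Proof. by rewrite addr0 /log2 ln1 mul0r. Qed.

Lemma ler_log2_1p (x y : R) : 0 <= x -> x <= y -> log2 (1 + x) <= log2 (1 + y).
Proof.
move=> x0 xy; rewrite /log2 ler_pM2r ?invr_gt0 ?ln_gt0 ?ltr1n // ler_ln ?posrE; lra.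
Qed.

Lemma ltr_log2_1p (x y : R) : 0 <= x -> x < y -> log2 (1 + x) < log2 (1 + y).
Proof.
move=> x0 xy; rewrite /log2 ltr_pM2r ?invr_gt0 ?ln_gt0 ?ltr1n // ltr_ln ?posrE; lra.
Qed.

Lemma ler_ratio_scale (a b s t : R) : 0 <= a -> 0 <= b -> 0 < s -> 1 <= t ->
  a / (b + s) <= t * a / (t * b + s).
Proof.
move=> a0 b0 s0 t1; have bs : 0 < b + s by lra.
have tbs : 0 < t * b + s by nra.
rewrite ler_pdivlMr // mulrAC ler_pdivrMr //.
have : 0 <= a * s * (t - 1) by rewrite !mulr_ge0 ?subr_ge0 // ltW.
nra.
Qed.

Lemma ltr_ratio_scale (a b s t : R) : 0 < a -> 0 <= b -> 0 < s -> 1 < t ->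
  a / (b + s) < t * a / (t * b + s).
Proof.
move=> a0 b0 s0 t1; have bs : 0 < b + s by lra.
have tbs : 0 < t * b + s by nra.
rewrite ltr_pdivlMr // mulrAC ltr_pdivrMr //.
have : 0 < a * s * (t - 1) by rewrite !mulr_gt0 ?subr_gt0.
nra.
Qed.

End LogRatio.

Section SumRate.
Variables (d : measure_display) (T : measurableType d) (R : realType)
  (mu : {measure set T -> \bar R}) (A : set T).
Hypothesis mA : measurable A.
Local Notation sq_int := (sq_int mu A).
Local Notation sqnorm := (sqnorm mu A).
Local Notation cint := (cint mu A).
Variables (K : nat) (H : 'I_K -> T -> R[i]) (Ak sigma2 : 'I_K -> R) (Pmax : R).
Hypotheses (Ak_gt0 : forall k, 0 < Ak k) (sigma2_gt0 : forall k, 0 < sigma2 k).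
Hypotheses (Pmax_gt0 : 0 < Pmax) (sH : forall j, sq_int (H j)).
Local Notation sinr := (sinr mu A H Ak sigma2).
Local Notation sum_rate := (sum_rate mu A H Ak sigma2).
Local Notation feasible := (feasible mu A Pmax).
Local Notation gain k u := (cint (fun r => H k r * u r)).

Lemma interference_ge0 V k : 0 <= \sum_(j < K | j != k) Ak j * sqn (gain k (V j)).
Proof. by apply: sumr_ge0 => j _; rewrite mulr_ge0 ?sqn_ge0 // ltW. Qed.

Lemma sinr_ge0 V k : 0 <= sinr V k.
Proof.
by rewrite divr_ge0 ?mulr_ge0 ?sqn_ge0 ?addr_ge0 ?interference_ge0 // ltW.
Qed.

Lemma eq_sum_rate V W : (forall i j, gain i (V j) = gain i (W j)) ->
  sum_rate V = sum_rate W.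
Proof.
move=> VW; apply: eq_bigr => k _; rewrite /Defs.sinr VW.
by under eq_bigr do rewrite VW.
Qed.

Lemma sum_rate_eq0 V : (forall k, gain k (V k) = 0) -> sum_rate V = 0.
Proof. by move=> V0; apply: big1 => k _; rewrite /Defs.sinr V0 sqn0 mulr0 mul0r log2_1p0. Qed.

Lemma sum_rate_gt0 V : (exists k, gain k (V k) != 0) -> 0 < sum_rate V.
Proof.
move=> [k Vk]; rewrite /Defs.sum_rate (bigD1 k) //=.
have rest : 0 <= \sum_(j < K | j != k) log2 (1 + sinr V j).
  by apply: sumr_ge0 => j _; rewrite -log2_1p0 ler_log2_1p ?sinr_ge0.
suff : 0 < log2 (1 + sinr V k) by lra.
rewrite -log2_1p0 ltr_log2_1p // divr_gt0 ?mulr_gt0 ?sqn_gt0 //.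
by rewrite ltr_wpDl ?interference_ge0.
Qed.

Lemma sinr_scale U (c : R) : (forall j, sq_int (U j)) -> forall k,
  sinr (fun j r => c%:C * U j r) k =
  c ^+ 2 * (Ak k * sqn (gain k (U k))) /
  (c ^+ 2 * \sum_(j < K | j != k) Ak j * sqn (gain k (U j)) + sigma2 k).
Proof.
move=> sU k.
have gainZ i j : gain i (fun r => c%:C * U j r) = c%:C * gain i (U j).
  by under eq_fun do rewrite mulrCA; rewrite (cintZ mA) //; exact: (cintegrableM mA).
rewrite /Defs.sinr gainZ sqnM sqn_real mulrCA mulr_sumr; congr (_ / (_ + _)).
by apply: eq_bigr => j _; rewrite gainZ sqnM sqn_real mulrCA.
Qed.

Lemma sum_rate_scale_lt U (c : R) : (forall j, sq_int (U j)) -> 1 < c ^+ 2 ->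
  (exists k, gain k (U k) != 0) -> sum_rate U < sum_rate (fun j r => c%:C * U j r).
Proof.
move=> sU c1 [k Uk]; rewrite /Defs.sum_rate (bigD1 k) //= [ltRHS](bigD1 k) //=.
apply: ltr_leD.
  rewrite ltr_log2_1p ?sinr_ge0 // sinr_scale //.
  by rewrite ltr_ratio_scale ?mulr_gt0 ?sqn_gt0 ?interference_ge0.
apply: ler_sum => j _; rewrite ler_log2_1p ?sinr_ge0 // sinr_scale //.
by rewrite ler_ratio_scale ?mulr_ge0 ?sqn_ge0 ?interference_ge0 ?(ltW c1) // ltW.
Qed.

Lemma power_sqnorm V : (forall j, sq_int (V j)) ->
  power mu A V = (\sum_(j < K) sqnorm (V j))%:E.
Proof. by move=> sV; rewrite /power -sumEFin; apply: eq_bigr => j _; rewrite sq_int_sqnormE. Qed.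

Definition normalize_power (U : 'I_K -> T -> R[i]) j r :=
  (Num.sqrt (Pmax / \sum_(i < K) sqnorm (U i)))%:C * U j r.

Lemma feasible_normalize_power U : (forall j, sq_int (U j)) ->
  0 < \sum_(j < K) sqnorm (U j) -> feasible (normalize_power U).
Proof.
move=> sU PU; have sW j : sq_int (normalize_power U j) by exact: (sq_intZ mA).
split => //; rewrite power_sqnorm //; congr EFin.
under eq_bigr do rewrite (sqnormZ mA) // sqn_real sqr_sqrtr ?divr_ge0 ?ltW //.
by rewrite -mulr_sumr divfK // gt_eqF.
Qed.

Lemma sqnorm_sum_gt0 U : (forall j, sq_int (U j)) ->
  (exists k, gain k (U k) != 0) -> 0 < \sum_(j < K) sqnorm (U j).
Proof.
move=> sU [k Uk]; have Uk_gt0 : 0 < sqnorm (U k).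
  rewrite lt0r sqnorm_ge0 andbT; apply: contra Uk => /eqP Uk0.
  by under eq_fun do rewrite mulrC; rewrite (cintM_sqnorm0 mA).
rewrite (bigD1 k) //= (lt_le_trans Uk_gt0) // lerDl.
by apply: sumr_ge0 => j _; exact: sqnorm_ge0.
Qed.

Lemma sum_rate_normalize_power_gt U : (forall j, sq_int (U j)) ->
  (exists k, gain k (U k) != 0) -> \sum_(j < K) sqnorm (U j) < Pmax ->
  sum_rate U < sum_rate (normalize_power U).
Proof.
move=> sU sig PU; have PU_gt0 := sqnorm_sum_gt0 sU sig.
apply: sum_rate_scale_lt => //.
by rewrite sqr_sqrtr ?divr_ge0 ?ltW // ltr_pdivlMr // mul1r.
Qed.

Lemma conj_span_orth (b : 'I_K -> R[i]) q : sq_int q -> (forall i, gain i q = 0) ->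
  cint (fun r => (\sum_(j < K) b j * (H j r)^*) * (q r)^*) = 0.
Proof.
move=> sq orth.
have -> : (fun r => (\sum_(j < K) b j * (H j r)^*) * (q r)^*) =
          (fun r => \sum_(j < K) b j * (H j r * q r)^*).
  by apply/funext => r; rewrite mulr_suml; apply: eq_bigr => j _; rewrite rmorphM mulrA.
rewrite (cint_sum mA) => [|j]; last exact/(cintegrable_conj mA)/(cintegrableM mA).
rewrite big1 // => j _.
by rewrite (cint_conj mA) ?orth ?conjc0 ?mulr0 //; exact: (cintegrableM mA).
Qed.

Hypothesis sH_gt0 : forall j, 0 < sqnorm (H j).
Local Notation optimal := (optimal mu A H Ak sigma2 Pmax).

Lemma optimal_has_signal V (k : 'I_K) : optimal V -> exists k', gain k' (V k') != 0.
Proof.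
move=> [_ opt]; apply: contrapT => /forallNP nosig.
(* Beaming H_k^* to user k alone gives a positive rate. *)
pose U j := if j == k then fun r => (H k r)^* else fun=> 0.
have sU j : sq_int (U j).
  by rewrite /U; case: eqP => _; [exact: (sq_int_conj mA) | exact: sq_int0].
have PU : \sum_(j < K) sqnorm (U j) = sqnorm (H k).
  rewrite (bigD1 k) //= big1 => [|j /negbTE jk]; last by rewrite /U jk sqnorm0.
  by rewrite /U eqxx addr0 sqnorm_conj.
have rateV0 : sum_rate V = 0.
  by apply: sum_rate_eq0 => j; apply/eqP/negPn/negP; exact: nosig.
have : sum_rate (normalize_power U) <= sum_rate V.
  by apply: opt; apply: feasible_normalize_power; rewrite // PU.
rewrite rateV0; apply/negP; rewrite -ltNge; apply: sum_rate_gt0; exists k.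
rewrite /normalize_power /U eqxx PU.
under eq_fun do rewrite mulrCA; rewrite (cintZ mA) ?cint_sqnorm //; last first.
  exact/(cintegrableM mA)/(sq_int_conj mA).
by rewrite mulf_neq0 ?fmorph_eq0 ?gt_eqF ?sqrtr_gt0 ?divr_gt0.
Qed.

Lemma optimal_residual_eq0 V k (b : 'I_K -> R[i]) q : optimal V ->
  (forall r, V k r = \sum_(j < K) b j * (H j r)^* + q r) -> sq_int q ->
  (forall i, gain i q = 0) -> sqnorm q = 0.
Proof.
move=> optV VkE sq orth; have [[sV pV] opt] := optV.
pose p r := \sum_(j < K) b j * (H j r)^*.
have sp : sq_int p by apply: (sq_int_sum mA) => j; exact/(sq_intZ mA)/(sq_int_conj mA).
have [//|qn0] := eqVneq (sqnorm q) 0.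
have q_gt0 : 0 < sqnorm q by rewrite lt0r qn0 sqnorm_ge0.
pose U j := if j == k then p else V j.
have sU j : sq_int (U j) by rewrite /U; case: eqP.
have gainU i j : gain i (U j) = gain i (V j).
  rewrite /U; case: eqP => [->|//].
  have -> : (fun r => H i r * V k r) = (fun r => 1 * (H i r * p r) + H i r * q r).
    by apply/funext => r; rewrite VkE mulrDr mul1r.
  by rewrite (cintZD mA) ?orth ?addr0 ?mul1r //; exact: (cintegrableM mA).
have PU : \sum_(j < K) sqnorm (U j) = Pmax - sqnorm q.
  move: pV; rewrite power_sqnorm // => -[<-].
  rewrite (bigD1 k) //= [in RHS](bigD1 k) //= {1}/U eqxx (funext VkE).
  rewrite sqnormD_orth ?conj_span_orth //.
  rewrite addrAC addrK; congr (_ + _); apply: eq_bigr => j /negbTE jk.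
  by rewrite /U jk.
have sigU : exists k', gain k' (U k') != 0.
  by have [k' sig] := optimal_has_signal k optV; exists k'; rewrite gainU.
have : sum_rate V < sum_rate (normalize_power U).
  rewrite (@eq_sum_rate V U) => [|i j]; last by rewrite gainU.
  by apply: sum_rate_normalize_power_gt => //; rewrite PU; lra.
rewrite ltNge opt //; apply: feasible_normalize_power => //.
exact: sqnorm_sum_gt0.
Qed.

Theorem optimal_in_conj_span V : optimal V -> forall k, exists b : 'I_K -> R[i],
  {ae mu, forall r, A r -> V k r = \sum_(j < K) b j * (H j r)^*}.
Proof.
move=> optV k; have sVk := optV.1.1 k.
have [b orth] := exists_conj_span_residual mA sH sVk.
pose q r := V k r - \sum_(j < K) b j * (H j r)^*.
have sq : sq_int q.
  apply: (sq_intB mA) => //; apply: (sq_int_sum mA) => j.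
  exact/(sq_intZ mA)/(sq_int_conj mA).
have VkE r : V k r = \sum_(j < K) b j * (H j r)^* + q r by rewrite addrC subrK.
exists b; apply: filterS (sqnorm_eq0_ae mA sq (optimal_residual_eq0 optV VkE sq orth)).
by move=> r qr0 Ar; apply/eqP; rewrite -subr_eq0; apply/eqP/qr0.
Qed.

End SumRate.

Section MeasurableReal.
Variables (d : measure_display) (T : measurableType d) (R : realType) (A : set T).
Implicit Types u : T -> R.

Lemma measurable_fun_continuous_comp (g : R -> R) u : continuous g ->
  measurable_fun A u -> measurable_fun A (fun x => g (u x)).
Proof. by move=> cg mu; exact: measurableT_comp (continuous_measurable_fun cg) mu. Qed.

Lemma measurable_funV_ge u (c : R) : 0 < c -> measurable_fun A u ->
  (forall x, A x -> c <= u x) -> measurable_fun A (fun x => (u x)^-1).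
Proof.
move=> c0 mu uc.
(* y |-> (max y c)^-1 is monotone, hence measurable, and is y |-> y^-1 above c. *)
have mV : measurable_fun setT (fun y : R => (Num.max y c)^-1).
  apply: nonincreasing_measurable => // y z yz.
  by rewrite lef_pV2 ?posrE ?lt_max ?c0 ?orbT // ge_max !le_max yz lexx !orbT.
apply: eq_measurable_fun (measurableT_comp mV mu) => x /set_mem Ax /=.
by rewrite max_l // uc.
Qed.

End MeasurableReal.

Section Vec3.
Variable R : realType.
Implicit Types u w : vec3 R.

Lemma dot3_ge0 u : 0 <= dot3 u u.
Proof. by rewrite /dot3 !addr_ge0 // -expr2 sqr_ge0. Qed.

Lemma dot3_sqr_le u w : dot3 u w ^+ 2 <= dot3 u u * dot3 w w.
Proof.
case: u => [[a b] c]; case: w => [[p q] t]; rewrite /dot3 /px /py /pz /=.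
have -> : (a * a + b * b + c * c) * (p * p + q * q + t * t) = (a * p + b * q + c * t) ^+ 2 +
    ((a * q - b * p) ^+ 2 + (a * t - c * p) ^+ 2 + (b * t - c * q) ^+ 2) by ring.
by rewrite lerDl !addr_ge0 // sqr_ge0.
Qed.

Lemma dot3_le_norm3 u w : dot3 u w <= norm3 u * norm3 w.
Proof.
have nn : 0 <= norm3 u * norm3 w by rewrite mulr_ge0 ?sqrtr_ge0.
have [uw_le0|uw_gt0] := lerP (dot3 u w) 0; first exact: le_trans uw_le0 nn.
rewrite -(@ler_pXn2r _ 2) ?nnegrE ?(ltW uw_gt0) // exprMn.
by rewrite /norm3 !sqr_sqrtr ?dot3_ge0 // dot3_sqr_le.
Qed.

Lemma norm3_subC u w : norm3 (sub3 u w) = norm3 (sub3 w u).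
Proof.
case: u => [[a b] c]; case: w => [[p q] t].
by rewrite /norm3 /dot3 /sub3 /px /py /pz /=; congr Num.sqrt; ring.
Qed.

End Vec3.

Section Channel.
Variable R : realType.
Variables (lambda : R) (er s : vec3 R).
Hypothesis lambda_gt0 : 0 < lambda.
Local Notation dist r := (norm3 (sub3 r s)).
Local Notation front r := (dot3 er (sub3 s r)).
Local Notation k := (k0 lambda).
Local Notation H := (chan lambda er s).

Lemma k0_gt0 : 0 < k.
Proof. by rewrite /k0 divr_gt0 // mulr_gt0 // pi_gt0. Qed.

Lemma eta0_gt0 : 0 < eta0 R.
Proof. by rewrite /eta0 mulr_gt0 // pi_gt0. Qed.

Lemma chanE r : H r =
  (Num.sqrt (front r / dist r))%:C *
  ('i * (k * eta0 R)%:C * Complex (cos (k * dist r)) (- sin (k * dist r)) *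
   ((4 * pi * dist r)^-1)%:C) *
  (1 + 'i * ((k * dist r)^-1)%:C - ((k * dist r)^-1 ^+ 2)%:C).
Proof.
have cR_inv (x : R) : (cR x)^-1 = (x^-1)%:C by rewrite [RHS]fmorphV.
by rewrite /chan !cR_inv mul1r -[k ^+ 2 * _]exprMn -exprVn.
Qed.

Let measurable_px : measurable_fun setT (@px R).
Proof. exact: measurableT_comp measurable_fst measurable_fst. Qed.

Let measurable_py : measurable_fun setT (@py R).
Proof. exact: measurableT_comp measurable_snd measurable_fst. Qed.

Let measurable_pz : measurable_fun setT (@pz R).
Proof. exact: measurable_snd. Qed.

Ltac measurable_polynomial := rewrite /dot3 /sub3 /px /py /pz /=; repeat first
  [ apply: measurable_funD | apply: measurable_funB | apply: measurable_funM
  | apply: measurable_funN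
  | exact: measurable_cst | exact: measurable_funTS measurable_px
  | exact: measurable_funTS measurable_py | exact: measurable_funTS measurable_pz ].

Lemma measurable_dist (A : set (vec3 R)) : measurable_fun A (fun r => dist r).
Proof.
apply: measurable_fun_continuous_comp; first exact: sqrt_continuous.
measurable_polynomial.
Qed.

Lemma measurable_front (A : set (vec3 R)) : measurable_fun A (fun r => front r).
Proof. measurable_polynomial. Qed.

Lemma chan_cmeasurable (A : set (vec3 R)) (d0 : R) : 0 < d0 ->
  (forall r, A r -> d0 <= dist r) -> cmeasurable A H.
Proof.
move=> d0_gt0 hd; have md := @measurable_dist A.
have mV (c : R) : 0 < c -> measurable_fun A (fun r => (c * dist r)^-1).
  move=> c_gt0; apply: (measurable_funV_ge (c := c * d0)); first exact: mulr_gt0.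
    exact: measurable_funM (measurable_cst _) md.
  by move=> r Ar; rewrite ler_pM2l // hd.
have mkd := measurable_funM (measurable_cst k) md.
rewrite (funext chanE); apply: cmeasurableM; first apply: cmeasurableM.
- apply/cmeasurable_real/measurable_fun_continuous_comp; first exact: sqrt_continuous.
  exact: measurable_funM (@measurable_front A) (measurable_funV_ge d0_gt0 md hd).
- have pi4_gt0 : 0 < 4 * pi :> R by rewrite mulr_gt0 // pi_gt0.
  apply: cmeasurableM; last exact: cmeasurable_real (mV _ pi4_gt0).
  apply: cmeasurableM; first exact: cmeasurable_cst.
  apply: cmeasurable_complex; last apply: measurable_funN.
  + exact: measurable_fun_continuous_comp (@continuous_cos R) mkd.
  + exact: measurable_fun_continuous_comp (@continuous_sin R) mkd.
- have mVk := mV _ k0_gt0.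
  apply: cmeasurableB; last exact: cmeasurable_real (measurable_funX _ mVk).
  apply: cmeasurableD; first exact: cmeasurable_cst.
  by apply: cmeasurableM; [exact: cmeasurable_cst | exact: cmeasurable_real mVk].
Qed.

Lemma sqn_chan r : 0 <= front r ->
  sqn (H r) = front r / dist r * (k * eta0 R / (4 * pi * dist r)) ^+ 2 *
              ((1 - (k * dist r)^-1 ^+ 2) ^+ 2 + (k * dist r)^-1 ^+ 2).
Proof.
move=> front_ge0.
have sqn_i : sqn ('i : R[i]) = 1 by rewrite /sqn /= expr0n expr1n add0r.
have sqn_phase x : sqn (Complex (cos x) (- sin x)) = 1.
  by rewrite /sqn /= sqrrN cos2Dsin2.
have sqn_last (x y : R) : sqn (1 + 'i * x%:C - y%:C) = (1 - y) ^+ 2 + x ^+ 2.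
  by rewrite /sqn /=; ring.
rewrite chanE !sqnM !sqn_real sqr_sqrtr ?divr_ge0 ?sqrtr_ge0 // sqn_i sqn_phase.
by rewrite sqn_last; ring.
Qed.

Hypothesis er_unit : norm3 er = 1.

Lemma front_le_dist r : front r <= dist r.
Proof. by rewrite -[dist r]mul1r -er_unit norm3_subC; exact: dot3_le_norm3. Qed.

Lemma chan_neq0 r : 0 < dist r -> 0 < front r -> H r != 0.
Proof.
move=> dist_gt0 front_gt0; have k_gt0 := k0_gt0; have eta_gt0 := eta0_gt0.
have d4_gt0 : 0 < 4 * pi * dist r by rewrite !mulr_gt0 // pi_gt0.
have x2_gt0 : 0 < (k * dist r)^-1 ^+ 2 by rewrite exprn_gt0 // invr_gt0 mulr_gt0.
rewrite -sqn_gt0 sqn_chan ?ltW //; apply: mulr_gt0; first apply: mulr_gt0.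
- exact: divr_gt0.
- by rewrite exprn_gt0 // divr_gt0 // mulr_gt0.
- by rewrite ltr_wpDl ?sqr_ge0.
Qed.

Lemma sqn_chan_le (d0 : R) r : 0 < d0 -> d0 <= dist r -> 0 < front r ->
  sqn (H r) <= (k * eta0 R / (4 * pi * d0)) ^+ 2 *
               ((1 + (k * d0)^-1 ^+ 2) ^+ 2 + (k * d0)^-1 ^+ 2).
Proof.
move=> d0_gt0 d0_le front_gt0; have k_gt0 := k0_gt0; have eta_gt0 := eta0_gt0.
have dist_gt0 : 0 < dist r := lt_le_trans d0_gt0 d0_le.
have pi_gt0 : 0 < pi :> R := pi_gt0 R.
have kd_gt0 : 0 < k * dist r by rewrite mulr_gt0.
have kd0_gt0 : 0 < k * d0 by rewrite mulr_gt0.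
have keta_gt0 : 0 < k * eta0 R by rewrite mulr_gt0.
have pi4_gt0 : 0 < 4 * pi :> R by rewrite mulr_gt0.
have d4_gt0 : 0 < 4 * pi * dist r by rewrite mulr_gt0.
have pathloss : k * eta0 R / (4 * pi * dist r) <= k * eta0 R / (4 * pi * d0).
  by rewrite ler_pM2l ?invr_gt0 // lef_pV2 ?posrE ?mulr_gt0 // ler_pM2l.
have x_gt0 : 0 < (k * dist r)^-1 by rewrite invr_gt0.
have xX : (k * dist r)^-1 <= (k * d0)^-1 by rewrite lef_pV2 ?posrE // ler_pM2l.
rewrite sqn_chan; last exact: ltW.
rewrite -[Y in _ <= Y * _]mul1r; apply: ler_pM.
- by rewrite mulr_ge0 ?sqr_ge0 // divr_ge0 ?ltW.
- by rewrite addr_ge0 ?sqr_ge0.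
- apply: ler_pM; rewrite ?sqr_ge0 //; first by rewrite divr_ge0 ?ltW.
    by rewrite ler_pdivrMr // mul1r front_le_dist.
  have pl_ge0 : 0 <= k * eta0 R / (4 * pi * dist r) by rewrite divr_ge0 ?ltW.
  by rewrite ler_pXn2r ?nnegrE ?pl_ge0 ?(le_trans pl_ge0 pathloss).
- have := sqr_ge0 (k * dist r)^-1; have X_gt0 := lt_le_trans x_gt0 xX.
  have : (k * dist r)^-1 ^+ 2 <= (k * d0)^-1 ^+ 2.
    by rewrite ler_pXn2r ?nnegrE ?(ltW x_gt0) ?(ltW X_gt0).
  nra.
Qed.

End Channel.

Section ChannelSquareIntegrable.
Variables (R : realType) (mu : {measure set vec3 R -> \bar R}) (A : set (vec3 R)).
Variables (lambda : R) (er s : vec3 R) (d0 : R).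
Hypotheses (mA : measurable A) (lambda_gt0 : 0 < lambda) (er_unit : norm3 er = 1).
Hypotheses (d0_gt0 : 0 < d0) (hdist : forall r, A r -> d0 <= norm3 (sub3 r s))
  (hfront : forall r, A r -> 0 < dot3 er (sub3 s r)).

Lemma chan_sq_int : (mu A < +oo)%E -> sq_int mu A (chan lambda er s).
Proof.
move=> muA_fin.
have bound r (Ar : A r) := sqn_chan_le lambda_gt0 er_unit d0_gt0 (hdist Ar) (hfront Ar).
exact: (sq_int_bounded mA muA_fin (chan_cmeasurable er lambda_gt0 d0_gt0 hdist) bound).
Qed.

Lemma chan_sqnorm_gt0 : (0 < mu A)%E -> (mu A < +oo)%E ->
  0 < sqnorm mu A (chan lambda er s).
Proof.
move=> muA_gt0 muA_fin; apply: (sqnorm_gt0 mA) => //; first exact: chan_sq_int.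
move=> r Ar; apply: chan_neq0 => //; last exact: hfront.
exact: lt_le_trans d0_gt0 (hdist Ar).
Qed.

End ChannelSquareIntegrable.

Local Close Scope complex_scope.
Local Close Scope classical_set_scope.
Unset Implicit Arguments.

Theorem proposition1 (R : realType) (K : nat)
  (mu : {measure set (vec3 R) -> \bar R}) (A : set (vec3 R))
  (lambda : R) (er : vec3 R) (s : 'I_K -> vec3 R)
  (Ak sigma2 : 'I_K -> R) (Pmax : R)
  (hA : measurable A) (hmuA0 : (0 < mu A)%E) (hmuAfin : (mu A < +oo)%E)
  (hlambda : 0 < lambda) (her : norm3 er = 1)
  (hAk : forall k, 0 < Ak k) (hsigma : forall k, 0 < sigma2 k) (hP : 0 < Pmax)
  (hfront : forall k r, A r -> 0 < dot3 er (sub3 (s k) r))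
  (hdist : exists d0 : R, 0 < d0 /\ forall k r, A r -> d0 <= norm3 (sub3 r (s k)))
  (V : 'I_K -> vec3 R -> R[i]) :
  optimal mu A (fun k => chan lambda er (s k)) Ak sigma2 Pmax V ->
  forall k : 'I_K, exists b : 'I_K -> R[i],
    {ae mu, forall r, A r ->
       V k r = \sum_(j < K) b j * (chan lambda er (s j) r)^*}.
Proof.
have [d0 [d0_gt0 hd]] := hdist.
apply: (optimal_in_conj_span hA hAk hsigma hP) => j.
- exact: chan_sq_int hA hlambda her d0_gt0 (hd j) (hfront j) hmuAfin.
- exact: chan_sqnorm_gt0 hA hlambda her d0_gt0 (hd j) (hfront j) hmuA0 hmuAfin.
Qed.
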